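(* Let $\mathcal{V}$ be an equational class and $\mathbf{A}\in\mathsf{FP}(\mathcal{V})$ such that the set $\mathrm{Con}(\mathbf{A})$ of congruences of $\mathbf{A}$ is totally ordered by inclusion. If $\mathsf{C}_{\mathcal{V}}(\mathbf{A})\neq\emptyset$, then $\mathsf{C}_{\mathcal{V}}(\mathbf{A})$ is totally (pre)ordered and $\mathrm{type}(\mathsf{C}_{\mathcal{V}}(\mathbf{A}))\in\{1,0\}$. In particular, if $\mathbf{A}$ is simple, then either $\mathsf{C}_{\mathcal{V}}(\mathbf{A})=\emptyset$ or $\mathrm{type}(\mathsf{C}_{\mathcal{V}}(\mathbf{A}))=1$.
   Context: $\mathsf{FP}(\mathcal{V})$ is the class of finitely presented algebras of $\mathcal{V}$; $\mathbf{F}_{\mathcal{V}}(\omega)$ is the free algebra of $\mathcal{V}$ on countably many generators. An algebra is exact in $\mathcal{V}$ if isomorphic to a finitely generated subalgebra of $\mathbf{F}_{\mathcal{V}}(\omega)$. A coexact unifier of $\mathbf{A}$ is an onto homomorphism $u\colon\mathbf{A}\to\mathbf{E}$ with $\mathbf{E}$ exact in $\mathcal{V}$; for coexact unifiers $u_1\colon\mathbf{A}\to\mathbf{E}_1$, $u_2\colon\mathbf{A}\to\mathbf{E}_2$, $u_2\le u_1$ iff there is a homomorphism $f\colon\mathbf{E}_1\to\mathbf{E}_2$ with $f\circ u_1=u_2$; $\mathsf{C}_{\mathcal{V}}(\mathbf{A})$ is the set of coexact unifiers preordered by $\le$. Types of a nonempty preordered set via $\mu$-sets (complete sets — every element lies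 below a member — of pairwise incomparable elements): $0$ if none exists, $\infty$ if infinite, $\omega$ if finite of size $>1$, $1$ if of size $1$. *)

From Stdlib Require Import ClassicalEpsilon List.
From mathcomp Require Import all_boot.

Set Implicit Arguments.
Unset Strict Implicit.
Unset Printing Implicit Defensive.

Record signature := Signature { ops : Type; arity : ops -> nat }.

Record algebra (S : signature) := Algebra {
  carrier :> Type;
  op : forall o : ops S, ('I_(arity o) -> carrier) -> carrier }.
Arguments op {S} a o _ : rename.

Inductive term (S : signature) (X : Type) : Type :=
  | tvar : X -> term S X
  | tapp : forall o : ops S, ('I_(arity o) -> term S X) -> term S X.

Fixpoint eval (S : signature) (X : Type) (A : algebra S) (v : X -> A)
  (t : term S X) : A :=
  match t with
  | tvar x => v x
  | tapp o ts => op A o (fun i => eval v (ts i))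
  end.

(** A set of identities (over countably many variables) and its
    equational class: V = Mod(Eq).  [inV Eq A] means A belongs to V. *)
Definition inV (S : signature) (Eq : term S nat * term S nat -> Prop)
  (A : algebra S) : Prop :=
  forall e, Eq e -> forall v : nat -> A, eval v e.1 = eval v e.2.

Definition is_hom (S : signature) (A B : algebra S) (f : A -> B) : Prop :=
  forall o (args : 'I_(arity o) -> A), f (op A o args) = op B o (fun i => f (args i)).

Inductive gen (S : signature) (A : algebra S) (G : A -> Prop) : A -> Prop :=
  | gen_in : forall x, G x -> gen G x
  | gen_op : forall o (args : 'I_(arity o) -> A),
      (forall i, gen G (args i)) -> gen G (op A o args).

Definition congruence (S : signature) (A : algebra S) (th : A -> A -> Prop) : Prop :=
  (forall x, th x x) /\ (forall x y, th x y -> th y x) /\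
  (forall x y z, th x y -> th y z -> th x z) /\
  (forall o (a b : 'I_(arity o) -> A), (forall i, th (a i) (b i)) ->
      th (op A o a) (op A o b)).

Definition con_chain (S : signature) (A : algebra S) : Prop :=
  forall th1 th2 : A -> A -> Prop, congruence th1 -> congruence th2 ->
    (forall x y, th1 x y -> th2 x y) \/ (forall x y, th2 x y -> th1 x y).

Definition simple (S : signature) (A : algebra S) : Prop :=
  (exists x y : A, x <> y) /\
  forall th : A -> A -> Prop, congruence th ->
    (forall x y, th x y <-> x = y) \/ (forall x y, th x y).

(** (F, g) is the free algebra F_V(omega) of V on the generators g 0, g 1, ...
    (characterized up to isomorphism by its universal property). *)
Definition free_omega (S : signature) (Eq : term S nat * term S nat -> Prop)
  (F : algebra S) (g : nat -> F) : Prop :=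
  inV Eq F /\ (forall x, gen (fun y => exists k, y = g k) x) /\
  forall B : algebra S, inV Eq B -> forall b : nat -> B,
    exists f : F -> B, is_hom f /\ forall k, f (g k) = b k.

(** A is finitely presented in V: A = < a_1..a_n | R > in V with R finite,
    i.e. A is isomorphic to F_V(n)/Cg(R). *)
Definition fin_presented (S : signature) (Eq : term S nat * term S nat -> Prop)
  (A : algebra S) : Prop :=
  inV Eq A /\
  exists (n : nat) (a : 'I_n -> A) (R : list (term S 'I_n * term S 'I_n)),
    (forall x, gen (fun y => exists i, y = a i) x) /\
    (forall r, In r R -> eval a r.1 = eval a r.2) /\
    forall B : algebra S, inV Eq B -> forall b : 'I_n -> B,
      (forall r, In r R -> eval b r.1 = eval b r.2) ->
      exists f : A -> B, is_hom f /\ forall i, f (a i) = b i.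

(** A is exact in V: isomorphic to a finitely generated subalgebra of F_V(omega) *)
Definition exact (S : signature) (Eq : term S nat * term S nat -> Prop)
  (A : algebra S) : Prop :=
  exists (F : algebra S) (g : nat -> F), @free_omega S Eq F g /\
  exists (h : A -> F) (l : list F),
    is_hom h /\ (forall x y, h x = h y -> x = y) /\
    (forall y, (exists x, h x = y) <-> gen (fun z => In z l) y).

Record coexact (S : signature) (Eq : term S nat * term S nat -> Prop)
  (A : algebra S) := Coexact {
  cx_alg : algebra S;
  cx_map : A -> cx_alg;
  cx_hom : is_hom cx_map;
  cx_onto : forall y, exists x, cx_map x = y;
  cx_exact : exact Eq cx_alg }.

(** unif_le u2 u1  :  u2 <= u1  iff  f o u1 = u2 for some homomorphism f *)
Definition unif_le (S : signature) (Eq : term S nat * term S nat -> Prop)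
  (A : algebra S) (u2 u1 : coexact Eq A) : Prop :=
  exists f : cx_alg u1 -> cx_alg u2, is_hom f /\
    forall a, f (cx_map u1 a) = cx_map u2 a.

Inductive settype := type0 | type1 | typeomega | typeinf.

Definition mu_set (T : Type) (le : T -> T -> Prop) (M : T -> Prop) : Prop :=
  (forall x, exists m, M m /\ le x m) /\
  (forall m m', M m -> M m' -> m <> m' -> ~ le m m' /\ ~ le m' m).

Definition ptype (T : Type) (le : T -> T -> Prop) : settype :=
  if excluded_middle_informative (exists M, mu_set le M) then
    if excluded_middle_informative
         (exists M, mu_set le M /\ exists m, forall x, M x <-> x = m) then type1
    else if excluded_middle_informative
         (exists M (l : list T), mu_set le M /\ NoDup l /\ (forall x, M x <-> In x l))
    then typeomega else typeinf
  else type0.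

From Stdlib Require Import ClassicalEpsilon List Classical FunctionalExtensionality.
From mathcomp Require Import all_boot.

(* A coexact unifier is determined up to [unif_le]-equivalence by its kernel,
   and [u2 <= u1] holds as soon as ker u1 is contained in ker u2 (the
   factorisation exists because u1 is onto).  So if Con(A) is a chain, the
   unifiers are totally preordered, and a mu-set of a total preorder has at
   most one element: the type is 1 or 0.  If A is simple, the kernels are
   Delta or Nabla; an injective unifier is then a greatest element, and if
   there is none every unifier is greatest, so the type is 1. *)

Lemma ptype_eq1_of_greatest (T : Type) (le : T -> T -> Prop) (m : T) :
  (forall x, le x m) -> ptype le = type1.
Proof.
move=> top.
have mu_m : mu_set le (fun x => x = m).
  split; first by move=> x; exists m.
  by move=> a b a_m b_m []; rewrite a_m b_m.
rewrite /ptype.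
destruct (excluded_middle_informative _) as [mu_ex|no_mu];
  last by case: no_mu; exists (fun x => x = m).
destruct (excluded_middle_informative _) as [single_ex|no_single]; first by [].
by case: no_single; exists (fun x => x = m); split => //; exists m.
Qed.

Lemma mu_set_total_eq (T : Type) (le : T -> T -> Prop) (M : T -> Prop) :
  (forall x y, le x y \/ le y x) -> mu_set le M ->
  forall m m', M m -> M m' -> m = m'.
Proof.
move=> total [_ antichain] m m' Mm Mm'.
apply: NNPP => neq_mm'.
have [nle nle'] := antichain m m' Mm Mm' neq_mm'.
by case: (total m m').
Qed.

Lemma ptype_total (T : Type) (le : T -> T -> Prop) :
  inhabited T -> (forall x y, le x y \/ le y x) ->
  ptype le = type1 \/ ptype le = type0.
Proof.
move=> [x0] total; rewrite /ptype.
destruct (excluded_middle_informative _) as [[M muM]|no_mu]; last by right.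
destruct (excluded_middle_informative _) as [single_ex|no_single]; first by left.
case: no_single.
have [m [Mm _]] := muM.1 x0.
exists M; split=> //; exists m => x; split=> [Mx|-> //].
exact: mu_set_total_eq muM x m Mx Mm.
Qed.

Section CoexactUnifiers.

Variables (S : signature) (Eq : term S nat * term S nat -> Prop) (A : algebra S).

Definition cx_ker (u : coexact Eq A) (x y : A) : Prop := cx_map u x = cx_map u y.

Lemma cx_ker_congruence (u : coexact Eq A) : congruence (cx_ker u).
Proof.
rewrite /cx_ker; split; [by []|split; [by move=> x y ->|split]].
  by move=> x y z -> ->.
move=> o a b ker_ab; rewrite !(cx_hom u); f_equal.
exact: functional_extensionality_dep.
Qed.

Lemma unif_le_of_ker_sub (u1 u2 : coexact Eq A) :
  (forall x y, cx_ker u1 x y -> cx_ker u2 x y) -> unif_le u2 u1.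
Proof.
rewrite /cx_ker => ker_sub.
pose pre y := proj1_sig (constructive_indefinite_description _ (@cx_onto _ _ _ u1 y)).
have preK y : cx_map u1 (pre y) = y.
  by rewrite /pre; case: constructive_indefinite_description.
exists (fun y => cx_map u2 (pre y)); split; last by move=> a; apply: ker_sub.
move=> o args.
have op_pre : op (cx_alg u1) o args = cx_map u1 (op A o (fun i => pre (args i))).
  rewrite (cx_hom u1); f_equal.
  by apply: functional_extensionality_dep => i; rewrite preK.
rewrite (ker_sub _ (op A o (fun i => pre (args i)))) ?(cx_hom u2) //.
by rewrite preK op_pre.
Qed.

Lemma unif_le_total (u1 u2 : coexact Eq A) :
  con_chain A -> unif_le u1 u2 \/ unif_le u2 u1.
Proof.
move=> chain.
case: (chain _ _ (cx_ker_congruence u1) (cx_ker_congruence u2)) => ker_sub.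
- by right; apply: unif_le_of_ker_sub.
- by left; apply: unif_le_of_ker_sub.
Qed.

Lemma simple_unif_greatest : simple A -> coexact Eq A ->
  exists m : coexact Eq A, forall u, unif_le u m.
Proof.
move=> [_ simpleA] u0.
case: (classic (exists m : coexact Eq A, forall x y, cx_ker m x y -> x = y)).
  move=> [m inj_m]; exists m => u.
  by apply: unif_le_of_ker_sub => x y /inj_m ->.
move=> no_inj; exists u0 => u.
apply: unif_le_of_ker_sub => x y _.
case: (simpleA _ (cx_ker_congruence u)) => [ker_delta|]; last exact.
by case: no_inj; exists u => p q /ker_delta.
Qed.

End CoexactUnifiers.

Theorem corollary3p9 (S : signature) (Eq : term S nat * term S nat -> Prop)
  (A : algebra S) :
  fin_presented Eq A ->
  (con_chain A -> inhabited (coexact Eq A) ->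
     (forall u1 u2 : coexact Eq A, unif_le u1 u2 \/ unif_le u2 u1) /\
     (ptype (@unif_le S Eq A) = type1 \/ ptype (@unif_le S Eq A) = type0)) /\
  (simple A ->
     ~ inhabited (coexact Eq A) \/ ptype (@unif_le S Eq A) = type1).
Proof.
move=> _; split.
  move=> chain inhA.
  have total u1 u2 := @unif_le_total S Eq A u1 u2 chain.
  by split; last exact: ptype_total.
move=> simpleA.
case: (classic (inhabited (coexact Eq A))) => [[u0]|]; last by left.
right; have [m top] := @simple_unif_greatest S Eq A simpleA u0.
exact: ptype_eq1_of_greatest top.
Qed.
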